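(* Let $E$ be a nonzero real Banach space and $f\colon E\to\,]{-}\infty,\infty]$ be proper, convex and lower semicontinuous. Then $G((\partial f)^{\mathbb F})\subset G(\partial(f^* ))$, i.e. if $(y^*,y^{**})\in G((\partial f)^{\mathbb F})$ then $f^*(y^* )+f^{**}(y^{**})=\langle y^*,y^{**}\rangle$.
   Context: $f^*(x^* )=\sup_{x\in E}[\langle x,x^*\rangle-f(x)]$, $f^{**}(x^{**})=\sup_{x^*\in E^*}[\langle x^*,x^{**}\rangle-f^*(x^* )]$; $x^*\in\partial f(x)$ iff $f(x)+f^*(x^* )=\langle x,x^*\rangle$ ($\partial f$ is closed, monotone and quasidense). For a multifunction $S\colon E\rightrightarrows E^*$ with nonempty graph: closed means $G(S)$ norm-closed; monotone means $\langle s-t,s^*-t^*\rangle\ge0$ on $G(S)$; quasidense means for every $(x,x^* )$, $\inf_{(s,s^* )\in G(S)}[\tfrac12\|s-x\|^2+\tfrac12\|s^*-x^*\|^2+\langle s-x,s^*-x^*\rangle]\le0$. Let $\varphi_S(x,x^* )=\sup_{(s,s^* )\in G(S)}[\langle s,x^*\rangle+\langle x,s^*\rangle-\langle s,s^*\rangle]$ and $\varphi_S^*$ its conjugate on $E^*\times E^{**}$ under $\langle (x,x^* ),(y^*,y^{**})\rangle=\langle x,y^*\rangle+\langle x^*,y^{**}\rangle$. For $S$ closed, monotone, quasidense, $S^{\mathbb F}\colon E^*\rightrightarrows E^{**}$ is given by $(y^*,y^{**})\in G(S^{\mathbb F})$ iff $\varphi_S^*(y^*,y^{**})=\langle y^*,y^{**}\rangle$.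 *)

From HB Require Import structures.
From mathcomp Require Import all_boot all_order all_algebra.
From mathcomp Require Import all_classical all_reals all_analysis.
Set Implicit Arguments. Unset Strict Implicit. Unset Printing Implicit Defensive.
Import Order.TTheory GRing.Theory Num.Theory.
Import numFieldNormedType.Exports.
Local Open Scope classical_set_scope.
Local Open Scope ring_scope.

Section Duality.
Context {R : realType} {E : normedModType R}.

Definition is_dual (xs : E -> R) : Prop :=
  (forall (a : R) (x y : E), xs (a *: x + y) = a * xs x + xs y) /\ continuous xs.

Definition dnorm (xs : E -> R) : R :=
  sup [set `|xs x| | x in [set x : E | `|x| <= 1]].

(* E^starstar : bounded (= continuous) linear functionals on (E^star, dual norm);
   only the values on E^star matter *)
Definition is_bidual (xss : (E -> R) -> R) : Prop :=
  (forall (a : R) (xs ys : E -> R), is_dual xs -> is_dual ys ->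
      xss (fun x => a * xs x + ys x) = a * xss xs + xss ys) /\
  exists M : R, forall xs, is_dual xs -> `|xss xs| <= M * dnorm xs.

Local Open Scope ereal_scope.

Definition proper_fun (f : E -> \bar R) : Prop :=
  (exists x, f x != +oo) /\ (forall x, f x != -oo).

Definition convex_fun (f : E -> \bar R) : Prop :=
  forall (x y : E) (t : R), (0 < t < 1)%R ->
    f (t *: x + (1 - t) *: y)%R <= t%:E * f x + (1 - t)%:E * f y.

Definition fconj (f : E -> \bar R) (xs : E -> R) : \bar R :=
  ereal_sup [set (xs x)%:E - f x | x in [set: E]].

Definition fbiconj (f : E -> \bar R) (xss : (E -> R) -> R) : \bar R :=
  ereal_sup [set (xss xs)%:E - fconj f xs | xs in is_dual].

Definition subdiff_graph (f : E -> \bar R) : set (E * (E -> R)) :=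
  [set p | is_dual p.2 /\ f p.1 + fconj f p.2 = (p.2 p.1)%:E].

Definition phiS (G : set (E * (E -> R))) (x : E) (xs : E -> R) : \bar R :=
  ereal_sup [set ((xs s.1 + s.2 x - s.2 s.1)%R)%:E | s in G].

Definition phiS_conj (G : set (E * (E -> R)))
    (ys : E -> R) (yss : (E -> R) -> R) : \bar R :=
  ereal_sup [set ((ys p.1 + yss p.2)%R)%:E - phiS G p.1 p.2
            | p in [set p : E * (E -> R) | is_dual p.2]].

Definition graphF (G : set (E * (E -> R))) : set ((E -> R) * ((E -> R) -> R)) :=
  [set q | is_dual q.1 /\ is_bidual q.2 /\ phiS_conj G q.1 q.2 = (q.2 q.1)%:E].

End Duality.

From HB Require Import structures.
From mathcomp Require Import all_boot all_order all_algebra.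
From mathcomp Require Import all_classical all_reals all_analysis.
Set Implicit Arguments. Unset Strict Implicit. Unset Printing Implicit Defensive.
Import Order.TTheory GRing.Theory Num.Theory.
Import numFieldNormedType.Exports.
Local Open Scope classical_set_scope.
Local Open Scope ring_scope.

(** By Fenchel-Young, every point [(s, s^* )] of the graph of [∂f] gives
    [<s, x^*> + <x, s^*> - <s, s^*> <= f x + f^* x^*], so [φ_∂f <= f ⊕ f^*] and
    hence [f^* ⊕ f^** <= φ_∂f^*].  At a point of the graph of [(∂f)^F] this
    yields [f^* y^* + f^** y^** <= <y^*, y^**>]; the reverse inequality is
    Fenchel-Young for [f^*].  To keep the sum meaningful, [f^** y^**] must be
    [> -oo]: since [φ_∂f^*] is finite there, [∂f] cannot be empty, and any
    [(s, s^* )] in its graph gives [f^** y^** >= <s^*, y^**> - f^* s^* > -oo]. *)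

Section ExtendedRealSup.
Context {R : realType}.
Local Open Scope ereal_scope.

Lemma ereal_supD_le (A B : set (\bar R)) (c : \bar R) :
  c \is a fin_num -> (forall a b, A a -> B b -> a + b <= c) ->
  ereal_sup A + ereal_sup B <= c.
Proof.
move=> c_fin AB_le; rewrite -lee_suber_addr //; apply: ge_ereal_sup => a Aa.
rewrite lee_suber_addr // addeC -lee_suber_addr //.
apply: ge_ereal_sup => b Bb; rewrite lee_suber_addr // addeC.
exact: AB_le.
Qed.

End ExtendedRealSup.

Section Duality.
Context {R : realType} {E : normedModType R}.
Local Open Scope ereal_scope.

Lemma is_dual0 : is_dual (fun _ : E => 0%R).
Proof. by split=> [a x y|]; [rewrite mulr0 addr0 | exact: cst_continuous]. Qed.

Lemma phiS0 (x : E) (xs : E -> R) : phiS set0 x xs = -oo.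
Proof. by rewrite /phiS image_set0 ereal_sup0. Qed.

Lemma phiS_conj0 (ys : E -> R) (yss : (E -> R) -> R) :
  phiS_conj set0 ys yss = +oo.
Proof.
apply/eqP; rewrite -leye_eq; apply: le_trans (ereal_sup_ubound _); last first.
  by exists (0%R : E, fun=> 0%R); [exact: is_dual0 | reflexivity].
by rewrite phiS0.
Qed.

Lemma graphF_nonempty (G : set (E * (E -> R))) q : graphF G q -> G !=set0.
Proof.
move=> [_ [_ phiS_conj_q]]; apply/set0P/eqP => G0.
by move: phiS_conj_q; rewrite G0 phiS_conj0.
Qed.

Variable f : E -> \bar R.

Lemma fconj_ge (x : E) (xs : E -> R) : (xs x)%:E - f x <= fconj f xs.
Proof. by apply: ereal_sup_ubound; exists x. Qed.

Lemma fbiconj_ge (xs : E -> R) (xss : (E -> R) -> R) :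
  is_dual xs -> (xss xs)%:E - fconj f xs <= fbiconj f xss.
Proof. by move=> dxs; apply: ereal_sup_ubound; exists xs. Qed.

Hypothesis f_proper : proper_fun f.

Lemma fconj_neqNy (xs : E -> R) : fconj f xs != -oo.
Proof.
have [[x0 fx0_neqy] f_neqNy] := f_proper.
have /= := fconj_ge x0 xs; move: fx0_neqy (f_neqNy x0).
by case: (f x0) => // r _ _; case: (fconj f xs).
Qed.

Lemma fenchel_young (x : E) (xs : E -> R) : (xs x)%:E <= f x + fconj f xs.
Proof.
have := fconj_ge x xs; move: (f_proper.2 x) (fconj_neqNy xs).
case: (f x) => [r| |] // _ Fxs_neqNy.
  by rewrite leeBlDl.
by rewrite addye // leey.
Qed.

Lemma phiS_subdiff_le (x : E) (xs : E -> R) :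
  phiS (subdiff_graph f) x xs <= f x + fconj f xs.
Proof.
apply: ge_ereal_sup => _ [[s ss] [_ /= fs_Fss] <-] /=.
have := leeD (fenchel_young s xs) (fenchel_young x ss).
rewrite [f x + _]addeC addeACA fs_Fss [fconj f xs + _]addeC => le_sum.
by rewrite EFinB EFinD leeBlDl.
Qed.

Lemma subdiff_graph_fconj_fin (s : E) (ss : E -> R) :
  subdiff_graph f (s, ss) -> fconj f ss \is a fin_num.
Proof.
move=> [_ /= fs_Fss]; rewrite fin_numE fconj_neqNy /=.
by apply: contra_eq_neq fs_Fss => ->; rewrite addey ?(f_proper.2 s).
Qed.

Lemma fbiconj_neqNy (xss : (E -> R) -> R) :
  subdiff_graph f !=set0 -> fbiconj f xss != -oo.
Proof.
move=> [[s ss] s_ss]; have [dss _] := s_ss.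
have := fbiconj_ge xss dss; move: (subdiff_graph_fconj_fin s_ss).
by case: (fconj f ss) => // v _; apply: contraTneq => ->.
Qed.

Lemma fconj_add_fbiconj_le (ys : E -> R) (yss : (E -> R) -> R) :
  phiS_conj (subdiff_graph f) ys yss \is a fin_num ->
  fconj f ys + fbiconj f yss <= phiS_conj (subdiff_graph f) ys yss.
Proof.
move=> phiS_conj_fin; apply: ereal_supD_le => // _ _ [x _ <-] [xs dxs <-].
apply: le_trans (ereal_sup_ubound _); last by exists (x, xs).
apply: le_trans (leeB (lexx _) (phiS_subdiff_le x xs)) => /=.
move: (f_proper.2 x) (fconj_neqNy xs).
case: (f x) => [r| |]; case: (fconj f xs) => [t| |] //= _ _.
by rewrite -!EFinD lee_fin opprD addrACA.
Qed.

Lemma fconj_add_fbiconj_ge (ys : E -> R) (yss : (E -> R) -> R) :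
  is_dual ys -> fconj f ys \is a fin_num ->
  (yss ys)%:E <= fconj f ys + fbiconj f yss.
Proof. by move=> dys Fys_fin; rewrite -leeBlDl //; exact: fbiconj_ge. Qed.

End Duality.

Theorem lemma3p3 (R : realType) (E : completeNormedModType R)
    (f : E -> \bar R) :
  (exists x : E, x != 0) ->
  proper_fun f -> convex_fun f -> lower_semicontinuous f ->
  forall (ys : E -> R) (yss : (E -> R) -> R),
    graphF (subdiff_graph f) (ys, yss) ->
    (fconj f ys + fbiconj f yss = (yss ys)%:E)%E.
Proof.
move=> _ f_proper _ _ ys yss ys_yss; have [/= dys [_ phiS_conj_eq]] := ys_yss.
have le_c : (fconj f ys + fbiconj f yss <= (yss ys)%:E)%E.
  by rewrite -phiS_conj_eq fconj_add_fbiconj_le // phiS_conj_eq.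
have Fbi_neqNy : fbiconj f yss != -oo%E.
  exact: fbiconj_neqNy f_proper yss (graphF_nonempty ys_yss).
have Fys_fin : fconj f ys \is a fin_num.
  rewrite fin_numE fconj_neqNy //=.
  by apply: contraTneq le_c => ->; rewrite addye // leye_eq.
by apply/eqP; rewrite eq_le le_c fconj_add_fbiconj_ge.
Qed.
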